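(* Let $(M,d)$ be a complete metric space and $X\subseteq M$ compact. Assume that every $\mu\in P(X)$ admits a barycenter in $M$, that $Y=conv(X)$ is compact, and that at least one variance maximizing $\mu\in P(X)$ has a unique barycenter. Then the circumcenter of $X$ in $M$, which lies in $Y$, is unique.
   Context: $P(\cdot)$ denotes Borel probability measures. $Var(\mu)=\inf_{y\in M}\int_X d^2(x,y)\,d\mu(x)$, a barycenter of $\mu$ is a point of $M$ attaining this infimum, and a variance maximizing measure is a maximizer of $Var$ over $P(X)$. $conv(X)$ is the set of all barycenters of measures in $P(X)$. The circumradius of $X$ is $R=\inf_{y\in M}\sup_{x\in X}d(x,y)$, and a circumcenter of $X$ is a point $y\in M$ with $X\subseteq\bar B(y,R)$, where $\bar B(y,R)$ is the closed ball of radius $R$ about $y$. *)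

From HB Require Import structures.
From mathcomp Require Import all_boot all_order all_algebra.
From mathcomp Require Import all_classical all_reals all_analysis.
Set Implicit Arguments. Unset Strict Implicit. Unset Printing Implicit Defensive.
Import Order.TTheory GRing.Theory Num.Theory.
Local Open Scope classical_set_scope.
Local Open Scope ring_scope.

(* A metric space together with a distinguished point (needed by the
   library to build the Borel measurable type; harmless). *)
#[short(type="pointedMetricType")]
HB.structure Definition PointedMetric (K : numDomainType) :=
  { M of Pointed M & Metric K M }.

Section Defs.
Variables (R : realType) (M : pointedMetricType R).

Definition complete_metric : Prop :=
  forall F : set_system M, ProperFilter F -> cauchy F -> cvg F.

Definition borelM := g_sigma_algebraType (@open M).

Variable X : set M.

(* P(X): Borel probability measures on M concentrated on X
   (= Borel probability measures on the closed set X). *)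
Definition PX : set (probability borelM R) :=
  [set mu | mu (~` (X : set borelM)) = 0%E].

Definition sqdist_int (mu : probability borelM R) (y : M) : \bar R :=
  (\int[mu]_(x in (X : set borelM)) ((mdist (x : M) y) ^+ 2)%:E)%E.

Definition Var (mu : probability borelM R) : \bar R :=
  ereal_inf [set sqdist_int mu y | y in [set: M]].

Definition barycenter (mu : probability borelM R) (y : M) : Prop :=
  sqdist_int mu y = Var mu.

Definition variance_maximizing (mu : probability borelM R) : Prop :=
  PX mu /\ forall nu, PX nu -> (Var nu <= Var mu)%E.

Definition convX : set M :=
  [set y | exists2 mu, PX mu & barycenter mu y].

Definition circumradius : \bar R :=
  ereal_inf [set ereal_sup [set (mdist x y)%:E | x in X] | y in [set: M]].

Definition circumcenter (y : M) : Prop :=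
  X `<=` [set x | ((mdist y x)%:E <= circumradius)%E].

End Defs.

From HB Require Import structures.
From mathcomp Require Import all_boot all_order all_algebra.
From mathcomp Require Import all_classical all_reals all_analysis.
From mathcomp Require Import lra measurable_realfun.
Local Open Scope classical_set_scope.
Local Open Scope ring_scope.
Import Order.TTheory GRing.Theory Num.Theory.
Import numFieldNormedType.Exports.

(* Let mu be variance maximizing with unique barycenter b, and let x0 be in X.
   Moving a small mass t of mu to x0 cannot raise the variance; evaluating the
   variance of the mixture at one of its barycenters b_t gives
   d(x0, b_t)^2 <= Var(mu) and \int d^2(x, b_t) dmu <= (1 + 2t) Var(mu).
   The b_t lie in the compact set conv(X), so as t -> 0 they cluster at a
   barycenter of mu, that is at b; hence d(x, b)^2 <= Var(mu) on X.
   Since Var(mu) <= sup_X d(., y)^2 for every y, b is a circumcenter, and any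
   circumcenter c has \int d^2(x, c) dmu <= Var(mu), so c is a barycenter of
   mu, i.e. c = b. *)

Section real_inequalities.
Context {R : realFieldType}.

Lemma sqrD_le_slack (a s e : R) : 0 <= a -> 0 <= s -> s <= e -> e <= 1 ->
  (a + s) ^+ 2 <= a ^+ 2 + e * (a ^+ 2 + 2).
Proof.
move=> a0 s0 se e1.
have as_le : 2 * a * s <= e * (a ^+ 2 + 1).
  have := sqr_ge0 (a - 1); nra.
have ss_le : s ^+ 2 <= e by nra.
rewrite sqrrD; lra.
Qed.

Lemma ler_of_slack (a w c : R) : 0 <= c ->
  (forall e, 0 < e -> e <= 1 -> a <= w + e * c) -> a <= w.
Proof.
move=> c0 slack; apply/ler_addgt0Pr => eps eps0.
have k0 : 0 < eps + c + 1 by lra.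
pose e := eps / (eps + c + 1).
have eE : e * (eps + c + 1) = eps by rewrite mulfVK // gt_eqF.
have e0 : 0 < e by rewrite divr_gt0.
apply: (le_trans (slack e e0 _)); nra.
Qed.

Lemma conv_le_r (t a s w : R) : 0 < t -> t <= 1 -> w <= a ->
  (1 - t) * a + t * s <= w -> s <= w.
Proof. by move=> t0 t1 wa; nra. Qed.

Lemma conv_le_l (t a s w : R) : 0 < t -> t <= 1 / 2 -> 0 <= s -> 0 <= w ->
  (1 - t) * a + t * s <= w -> a <= w + t * (2 * w).
Proof.
move=> t0 t1 s0 w0 h.
have h1 : (1 - t) * (a - w - 2 * t * w) <= - (w * t * (1 - 2 * t)) by nra.
have h2 : 0 <= w * t * (1 - 2 * t) by rewrite !mulr_ge0 //; lra.
nra.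
Qed.

Lemma invrSS_gt0 (n : nat) : 0 < n.+2%:R^-1 :> R.
Proof. by rewrite invr_gt0 ltr0n. Qed.

Lemma invrSS_le_half (n : nat) : n.+2%:R^-1 <= 1 / 2 :> R.
Proof. by rewrite div1r lef_pV2 ?posrE ?ltr0n // ler_nat. Qed.

Lemma invrSS_le1 (n : nat) : n.+2%:R^-1 <= 1 :> R.
Proof.
by apply: le_trans (invrSS_le_half n) _; rewrite ler_pdivrMr ?mul1r ?ler1n.
Qed.

End real_inequalities.

Lemma near_invrSS_le {R : archiRealFieldType} (e : R) : 0 < e ->
  \forall n \near \oo, n.+2%:R^-1 <= e.
Proof.
move=> e0; have := near_infty_natSinv_lt (PosNum e0).
apply: filterS => n /ltW; apply: le_trans.
by rewrite lef_pV2 ?posrE ?ltr0n // ler_nat.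
Qed.

Lemma lee_of_slack (R : realFieldType) (x : \bar R) (w c : R) : 0 <= c ->
  (forall e, 0 < e -> e <= 1 -> (x <= (w + e * c)%:E)%E) -> (x <= w%:E)%E.
Proof.
case: x => [r| |] c0 slack.
- by rewrite lee_fin; apply: (@ler_of_slack _ _ _ c).
- by have := slack 1 ltr01 (lexx 1); rewrite leye_eq.
- by rewrite leNye.
Qed.

Section convex_combination_of_probabilities.
Context {d} {T : measurableType d} {R : realType}.
Variables (t : {i01 R}) (mu nu : probability T R).

Definition conv_prob : set T -> \bar R :=
  measure_add (mscale (1 - t%:inum)%:nng mu) (mscale t%:inum%:nng nu).

HB.instance Definition _ := Measure.on conv_prob.

Lemma conv_probE A : conv_prob A = ((1 - t%:inum)%:E * mu A + t%:inum%:E * nu A)%E.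
Proof. exact: measure_addE. Qed.

Lemma conv_prob_setT : conv_prob [set: T] = 1%E.
Proof. by rewrite conv_probE !probability_setT !mule1 -EFinD subrK. Qed.

HB.instance Definition _ :=
  Measure_isProbability.Build _ _ _ conv_prob conv_prob_setT.

Lemma ge0_integral_conv_prob (D : set T) (f : T -> \bar R) :
  measurable D -> measurable_fun D f -> (forall x, D x -> 0 <= f x)%E ->
  (\int[conv_prob]_(x in D) f x =
   (1 - t%:inum)%:E * \int[mu]_(x in D) f x + t%:inum%:E * \int[nu]_(x in D) f x)%E.
Proof.
move=> mD mf f0.
by rewrite ge0_integral_measure_add // !ge0_integral_mscale.
Qed.

End convex_combination_of_probabilities.

Section squared_distance_integral.
Context {R : realType} {M : pointedMetricType R}.
Local Notation T := (borelM M).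

Lemma continuous_mdist (y : M) : continuous (fun x : M => mdist x y).
Proof.
move=> x; apply/cvgrPdist_lt => e e0.
apply: filterS (nbhsx_ballx x e e0) => z; rewrite ballEmdist /= => xz.
have := metric_triangle x z y; have := metric_triangle z x y.
rewrite (metric_sym z x) ltr_norml => *; apply/andP; split; lra.
Qed.

Lemma cluster_mdist_lt {u : nat -> M} {p : M} (N : nat) {e : R} :
  cluster (u @ \oo) p -> 0 < e -> exists2 n, (N <= n)%N & mdist p (u n) < e.
Proof.
move=> cl e0.
have tail : (u @ \oo) [set z | exists2 n, (N <= n)%N & z = u n].
  by apply: filterS (nbhs_infty_ge N) => n Nn; exists n.
have [_ [[n Nn ->]]] := cl _ _ tail (nbhsx_ballx p e e0).
by rewrite ballEmdist; exists n.
Qed.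

Lemma measurable_open (A : set M) : open A -> measurable (A : set T).
Proof. exact: sub_sigma_algebra. Qed.

Lemma compact_measurable {X : set M} : compact X -> measurable (X : set T).
Proof.
move=> /(compact_closed (@metric_hausdorff _ M)) /closed_openC /measurable_open.
by rewrite -{2}(setCK X); exact: measurableC.
Qed.

Lemma measurable_sqdist (D : set T) (y : M) :
  measurable_fun D (fun x : T => (mdist (x : M) y ^+ 2)%:E).
Proof.
apply/measurable_funTS/measurable_EFinP/measurable_funX.
apply: (measurability _ (RGenOpens.measurableE R)) => _ [_ [a [b ->] <-]].
rewrite setTI; apply: measurable_open.
by move: (continuous_mdist y) => /continuousP; apply; exact: interval_open.
Qed.

Lemma measurable_affine_sqdist (D : set T) (y : M) k c :
  measurable_fun D (fun x : T => (k * mdist (x : M) y ^+ 2 + c)%:E).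
Proof.
apply/measurable_EFinP/measurable_funD => //; apply: measurable_funM => //.
by apply/measurable_EFinP; exact: measurable_sqdist.
Qed.

Context {X : set M}.

Lemma sqdist_int_ge0 (mu : probability T R) y : (0 <= sqdist_int X mu y)%E.
Proof. by apply: integral_ge0 => x _; rewrite lee_fin sqr_ge0. Qed.

Lemma Var_ge0 (mu : probability T R) : (0 <= Var X mu)%E.
Proof. by apply: le_ereal_inf_tmp => _ [y _ <-]; exact: sqdist_int_ge0. Qed.

Lemma Var_le_sqdist_int (mu : probability T R) y :
  (Var X mu <= sqdist_int X mu y)%E.
Proof. by apply: ereal_inf_lbound; exists y. Qed.

Hypothesis mX : measurable (X : set T).

Lemma PX_measure (mu : probability T R) : PX X mu -> mu X = 1%E.
Proof.
rewrite /PX /= probability_setC // => /eqP.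
by rewrite sube_eq // add0e => /eqP.
Qed.

Lemma integral_affine_sqdist (mu : probability T R) y k c :
  PX X mu -> 0 <= k -> 0 <= c ->
  (\int[mu]_(x in (X : set T)) ((k * mdist (x : M) y ^+ 2 + c)%:E) =
   k%:E * sqdist_int X mu y + c%:E)%E.
Proof.
move=> PXmu k0 c0.
under eq_integral do rewrite EFinD EFinM.
rewrite ge0_integralD //; last 2 first.
- by move=> x _; rewrite -EFinM lee_fin mulr_ge0 // sqr_ge0.
- by apply: emeasurable_funM; [exact: measurable_cst | exact: measurable_sqdist].
rewrite ge0_integralZl_EFin //; last 2 first.
- by move=> x _; rewrite lee_fin sqr_ge0.
- exact: measurable_sqdist.
by rewrite integral_cst // -[c%:E in RHS]mule1 -(PX_measure _ PXmu).
Qed.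

Lemma sqdist_int_le (mu : probability T R) y c : PX X mu -> 0 <= c ->
  (forall x, X x -> mdist x y ^+ 2 <= c) -> (sqdist_int X mu y <= c%:E)%E.
Proof.
move=> PXmu c0 le_c.
have := integral_affine_sqdist mu y 0 c PXmu (lexx 0) c0; rewrite mul0e add0e => <-.
apply: ge0_le_integral => //.
- by move=> x _; rewrite lee_fin sqr_ge0.
- exact: measurable_sqdist.
- exact: measurable_affine_sqdist.
- by move=> x Xx; rewrite lee_fin mul0r add0r; exact: le_c.
Qed.

Lemma sqdist_int_near {mu : probability T R} {y z : M} {a e : R} : PX X mu ->
  (sqdist_int X mu y <= a%:E)%E -> mdist y z <= e -> e <= 1 ->
  (sqdist_int X mu z <= (a + e * (a + 2))%:E)%E.
Proof.
move=> PXmu le_a yz e1; have e0 := le_trans (mdist_ge0 y z) yz.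
apply: (@le_trans _ _ (\int[mu]_(x in (X : set T))
    (((1 + e) * mdist (x : M) y ^+ 2 + e * 2)%:E))%E).
  apply: ge0_le_integral => //.
  - by move=> x _; rewrite lee_fin sqr_ge0.
  - exact: measurable_sqdist.
  - exact: measurable_affine_sqdist.
  - move=> x _; rewrite lee_fin.
    have xz := metric_triangle (x : M) y z.
    have := sqrD_le_slack _ _ _ (mdist_ge0 (x : M) y) (mdist_ge0 y z) yz e1.
    have := mdist_ge0 (x : M) z; rewrite !expr2; nra.
rewrite integral_affine_sqdist //; last 2 first.
- lra.
- by rewrite mulr_ge0 //; lra.
move: le_a (sqdist_int_ge0 mu y); case: (sqdist_int X mu y) => // s.
by rewrite -EFinM -EFinD !lee_fin => s_le s0; nra.
Qed.

Lemma PX_conv_dirac (t : {i01 R}) (mu : probability T R) (x0 : M) :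
  X x0 -> PX X mu -> PX X (conv_prob t mu \d_(x0 : T)).
Proof.
move=> Xx0 PXmu; rewrite /PX /= conv_probE PXmu mule0 add0e /= diracE.
by rewrite memNset ?mule0 //=; exact.
Qed.

Lemma sqdist_int_conv_dirac (t : {i01 R}) (mu : probability T R) (x0 y : M) :
  X x0 -> sqdist_int X (conv_prob t mu \d_(x0 : T)) y =
  ((1 - t%:inum)%:E * sqdist_int X mu y + t%:inum%:E * (mdist x0 y ^+ 2)%:E)%E.
Proof.
move=> Xx0; rewrite /sqdist_int ge0_integral_conv_prob //; last 2 first.
- exact: measurable_sqdist.
- by move=> x _; rewrite lee_fin sqr_ge0.
rewrite integral_dirac //; last exact: measurable_sqdist.
by rewrite diracE mem_set // mul1e.
Qed.

End squared_distance_integral.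

Section mixing_in_a_point.
Context {R : realType} {M : pointedMetricType R} {X : set M}.
Local Notation T := (borelM M).
Hypotheses (mX : measurable (X : set T))
  (barycenter_exists : forall nu, PX X nu -> exists y, barycenter X nu y).
Context {mu : probability T R} {x0 : M} {w : R}.
Hypotheses (mu_max : variance_maximizing X mu) (Xx0 : X x0)
  (Var_mu : Var X mu = w%:E).

Let w_ge0 : 0 <= w.
Proof. by rewrite -lee_fin -Var_mu Var_ge0. Qed.

Lemma conv_dirac_barycenter_bounds (t : {i01 R}) (y : M) :
  0 < t%:inum -> t%:inum <= 1 / 2 -> barycenter X (conv_prob t mu \d_(x0 : T)) y ->
  mdist x0 y ^+ 2 <= w /\ (sqdist_int X mu y <= (w + t%:inum * (2 * w))%:E)%E.
Proof.
move=> t0 t1 bary.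
have mix_le : (sqdist_int X (conv_prob t mu \d_(x0 : T)) y <= w%:E)%E.
  by rewrite bary -Var_mu; apply: mu_max.2; exact: PX_conv_dirac mu_max.1.
have := Var_le_sqdist_int (X := X) mu y; rewrite Var_mu.
move: mix_le (sqdist_int_ge0 (X := X) mu y); rewrite sqdist_int_conv_dirac //.
case: (sqdist_int X mu y) => [a| |] //; last first.
  by rewrite gt0_muley ?lte_fin ?subr_gt0 ?addye //; lra.
rewrite -!EFinM -EFinD !lee_fin => mix_le a0 wa.
have x0y0 := sqr_ge0 (mdist x0 y).
split; first exact: conv_le_r mix_le.
by apply: conv_le_l mix_le.
Qed.

Let t (n : nat) : {i01 R} := Itv01 (ltW (invrSS_gt0 n)) (invrSS_le1 n).

Let mix_PX n : PX X (conv_prob (t n) mu \d_(x0 : T)).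
Proof. exact: PX_conv_dirac mu_max.1. Qed.

Let b (n : nat) : M := projT1 (cid (barycenter_exists _ (mix_PX n))).

Let b_bounds n : mdist x0 (b n) ^+ 2 <= w /\
  (sqdist_int X mu (b n) <= (w + n.+2%:R^-1 * (2 * w))%:E)%E.
Proof.
apply: (conv_dirac_barycenter_bounds (t n)).
- exact: invrSS_gt0.
- exact: invrSS_le_half.
- by rewrite /b; case: cid.
Qed.

Let cluster_barycenter (p : M) :
  cluster (b @ \oo) p -> barycenter X mu p.
Proof.
move=> cl; apply/le_anti; rewrite Var_le_sqdist_int andbT Var_mu.
apply: (@lee_of_slack _ _ w (5 * w + 2)) => [|e e0 e1]; first by have := w_ge0; lra.
have [N _ small_t] := near_invrSS_le _ e0.
have [n /small_t tn pn] := cluster_mdist_lt N cl e0.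
have [_ bn_le] := b_bounds n.
rewrite metric_sym in pn.
apply: le_trans (sqdist_int_near mX mu_max.1 bn_le (ltW pn) e1) _.
rewrite lee_fin.
have tw_le : n.+2%:R^-1 * w <= e * w by rewrite ler_wpM2r.
have etw_le : e * (n.+2%:R^-1 * w) <= e * w.
  by rewrite ler_wpM2l ?(ltW e0) // ler_piMl // invrSS_le1.
set s := n.+2%:R^-1 in tw_le etw_le *; nra.
Qed.

Let cluster_sqdist_le (p : M) :
  cluster (b @ \oo) p -> mdist x0 p ^+ 2 <= w.
Proof.
move=> cl; rewrite -lee_fin.
apply: (@lee_of_slack _ _ w (w + 2)) => [|e e0 e1]; first by have := w_ge0; lra.
have [n _ pn] := cluster_mdist_lt 0 cl e0.
have [x0bn _] := b_bounds n.
have := metric_triangle x0 (b n) p; rewrite (metric_sym (b n) p) lee_fin.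
have := sqrD_le_slack _ _ _ (mdist_ge0 x0 (b n)) (mdist_ge0 p (b n)) (ltW pn) e1.
have := mdist_ge0 x0 p; have := mdist_ge0 x0 (b n); nra.
Qed.

Lemma sqdist_le_of_unique_barycenter (b0 : M) : compact (convX X) ->
  (forall y, barycenter X mu y -> b0 = y) -> mdist x0 b0 ^+ 2 <= w.
Proof.
move=> cY b0_uniq; have [p [_ clp]] : convX X `&` cluster (b @ \oo) !=set0.
  apply: cY; exists 0%N => // n _.
  by exists (conv_prob (t n) mu \d_(x0 : T)); last by rewrite /b; case: cid.
by rewrite (b0_uniq p (cluster_barycenter _ clp)); exact: cluster_sqdist_le.
Qed.

End mixing_in_a_point.

Section circumcenter.
Context {R : realType} {M : pointedMetricType R} {X : set M}.
Local Notation T := (borelM M).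
Hypothesis mX : measurable (X : set T).

Lemma sqdist_le_Var_of_unique_barycenter {mu : probability T R} {b : M} :
  (forall nu, PX X nu -> exists y, barycenter X nu y) -> compact (convX X) ->
  variance_maximizing X mu -> (forall y, barycenter X mu y -> b = y) ->
  forall x, X x -> ((mdist x b ^+ 2)%:E <= Var X mu)%E.
Proof.
move=> bary_ex cY mu_max b_uniq x Xx.
have := Var_ge0 (X := X) mu.
case Var_mu : (Var X mu) => [w| |] // _; last by rewrite leey.
by rewrite lee_fin (sqdist_le_of_unique_barycenter mX bary_ex mu_max Xx Var_mu).
Qed.

Context {mu : probability T R} {b : M}.
Hypotheses (PXmu : PX X mu)
  (b_close : forall x, X x -> ((mdist x b ^+ 2)%:E <= Var X mu)%E).

Lemma circumcenter_of_sqdist_le_Var : circumcenter X b.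
Proof.
move=> x Xx; apply: le_ereal_inf_tmp => _ [y _ <-].
have x_le : ((mdist x y)%:E <= ereal_sup [set (mdist x' y)%:E | x' in X])%E.
  by apply: ereal_sup_ubound; exists x.
case sup_y : (ereal_sup _) x_le => [r| |] // x_le; last by rewrite leey.
have r_bound x' : X x' -> mdist x' y ^+ 2 <= r ^+ 2.
  move=> Xx'; rewrite ler_sqr ?nnegrE ?mdist_ge0 ?(le_trans (mdist_ge0 x y)) //.
  by rewrite -lee_fin -sup_y; apply: ereal_sup_ubound; exists x'.
have := le_trans (b_close x Xx) (le_trans (Var_le_sqdist_int mu y)
  (sqdist_int_le mX mu y _ PXmu (sqr_ge0 r) r_bound)).
rewrite !lee_fin metric_sym.
by rewrite ler_sqr ?nnegrE ?mdist_ge0 ?(le_trans (mdist_ge0 x y)).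
Qed.

Lemma barycenter_of_circumcenter (c : M) : circumcenter X c -> barycenter X mu c.
Proof.
move=> circ_c; apply/le_anti; rewrite Var_le_sqdist_int andbT.
have := Var_ge0 (X := X) mu.
case Var_mu : (Var X mu) => [w| |] //; last by rewrite !leey.
rewrite lee_fin => w0.
have radius_le : (circumradius X <= (Num.sqrt w)%:E)%E.
  apply: (@le_trans _ _ (ereal_sup [set (mdist x b)%:E | x in X])).
    by apply: ereal_inf_lbound; exists b.
  apply: ge_ereal_sup => _ [x Xx <-].
  rewrite lee_fin -ler_sqr ?nnegrE ?sqrtr_ge0 ?mdist_ge0 //.
  by rewrite sqr_sqrtr // -lee_fin -Var_mu; exact: b_close.
apply: sqdist_int_le => // x Xx.
have := le_trans (circ_c x Xx) radius_le.
rewrite lee_fin -ler_sqr ?nnegrE ?sqrtr_ge0 ?mdist_ge0 //.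
by rewrite sqr_sqrtr // metric_sym.
Qed.

End circumcenter.

Theorem corollary3p3 (R : realType) (M : pointedMetricType R) (X : set M) :
  complete_metric M ->
  compact X ->
  (forall mu, PX X mu -> exists y, barycenter X mu y) ->
  compact (convX X) ->
  (exists mu, variance_maximizing X mu /\ exists! y, barycenter X mu y) ->
  (exists! y, circumcenter X y) /\ (forall y, circumcenter X y -> convX X y).
Proof.
move=> _ cX bary_ex cY [mu [mu_max [b [b_bary b_uniq]]]].
have mX := compact_measurable cX.
have b_close := sqdist_le_Var_of_unique_barycenter mX bary_ex cY mu_max b_uniq.
have b_circ := circumcenter_of_sqdist_le_Var mX mu_max.1 b_close.
have circ_eq_b c : circumcenter X c -> c = b.
  by move=> /(barycenter_of_circumcenter mX mu_max.1 b_close) /b_uniq.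
split; first by exists b; split => // c /circ_eq_b.
by move=> c /circ_eq_b ->; exists mu; first exact: mu_max.1.
Qed.
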